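(* In the setting of the context, for every $k\in\{0,\dots,K-1\}$ and every fixed sequence of previously observed feature values $f_1,\dots,f_k$, the function $\varpi\mapsto\mathcal{A}_k(\varpi; f_1,\dots,f_k)$ on the probability simplex is concave, continuous, and piecewise linear.
   Context: There are $L$ classes $c_1,\dots,c_L$ with class variable $\mathcal{C}$, and features $F_1,\dots,F_K$ with finitely many values, jointly distributed with $\mathcal{C}$. Let $e_k>0$ be feature evaluation costs, $Q_{ij}\geqslant 0$ misclassification costs, $Q_j=[Q_{1j},\dots,Q_{Lj}]^T$, and on the simplex $\Sigma=\{\varpi\in[0,1]^L:\sum_i\omega_i=1\}$ let $g(\varpi)=\min_{1\leqslant j\leqslant L}Q_j^T\varpi$. Let $\Delta(f_{k+1}\mid f_1,\dots,f_k)=[P(F_{k+1}=f_{k+1}\mid F_1=f_1,\dots,F_k=f_k,\mathcal{C}=c_i)]_{i=1}^L$ (a column vector with nonnegative entries). Define recursively $\bar{J}_K(\varpi;f_1,\dots,f_K)=g(\varpi)$ and, for $k=K-1,\dots,0$, $$\mathcal{A}_k(\varpi;f_1,\dots,f_k)=e_{k+1}+\sum_{f_{k+1}}\Delta^T(f_{k+1}\mid f_1,\dots,f_k)\varpi\;\bar{J}_{k+1}\!\left(\frac{\operatorname{diag}(\Delta(f_{k+1}\mid f_1,\dots,f_k))\varpi}{\Delta^T(f_{k+1}\mid f_1,\dots,f_k)\varpi};f_1,\dots,f_{k+1}\right),$$ $$\bar{J}_k(\varpi;f_1,\dots,f_k)=\min\big[g(\varpi),\mathcal{A}_k(\varpi;f_1,\dots,f_k)\big],$$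 where the sum is over the possible values of $F_{k+1}$ and a summand whose factor $\Delta^T\varpi$ equals $0$ is taken to be $0$. *)

From HB Require Import structures.
From mathcomp Require Import all_boot all_order all_algebra.
From mathcomp Require Import all_classical all_reals all_analysis.
Set Implicit Arguments. Unset Strict Implicit. Unset Printing Implicit Defensive.
Import Order.TTheory GRing.Theory Num.Theory.
Import numFieldNormedType.Exports.
Local Open Scope classical_set_scope.
Local Open Scope ring_scope.

Section CostToGo.
Variables (R : realType) (L K : nat) (V : finType).
(* p i x = P(C = c_i, (F_1,...,F_K) = (x 0, ..., x (K-1)))  (features 0-indexed) *)
Variable p : 'I_L -> {ffun 'I_K -> V} -> R.
(* e k = cost of evaluating feature F_{k+1} (0-indexed) *)
Variable e : nat -> R.
Variable Q : 'I_L -> 'I_L -> R.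

Definition simplex : set 'rV[R]_L :=
  [set w | (forall i, 0 <= w 0 i) /\ \sum_i w 0 i = 1].

(* minimum of a finite family of reals (the seed is >= every entry, so it is
   the true minimum whenever L > 0) *)
Definition minL (c : 'I_L -> R) : R :=
  \big[Num.min/ \big[Num.max/0]_(j < L) c j]_(j < L) c j.

Definition gfun (w : 'rV[R]_L) : R := minL (fun j => \sum_i Q i j * w 0 i).

(* the event {F_1 = h 0, ..., F_k = h (k-1)} *)
Definition prefix_ok (k : nat) (h x : {ffun 'I_K -> V}) : bool :=
  [forall j : 'I_K, (j < k)%N ==> (x j == h j)].

(* Delta(v | f_1..f_k)_i = P(F_{k+1} = v | F_1..F_k = f, C = c_i)
   (set to 0 when the conditioning event has probability 0) *)
Definition Delta (k : nat) (h : {ffun 'I_K -> V}) (v : V) (i : 'I_L) : R :=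
  (\sum_(x | prefix_ok k h x && [forall j : 'I_K, (j == k :> nat) ==> (x j == v)]) p i x)
  / (\sum_(x | prefix_ok k h x) p i x).

Definition upd (k : nat) (h : {ffun 'I_K -> V}) (v : V) : {ffun 'I_K -> V} :=
  [ffun j : 'I_K => if (nat_of_ord j == k) then v else h j].

Definition Aop (k : nat) (h : {ffun 'I_K -> V}) (w : 'rV[R]_L)
  (J : {ffun 'I_K -> V} -> 'rV[R]_L -> R) : R :=
  e k + \sum_(v : V)
    (let s := \sum_i Delta k h v i * w 0 i in
     if s == 0 then 0
     else s * J (upd k h v) (\row_i (Delta k h v i * w 0 i / s))).

Fixpoint Jaux (n k : nat) (h : {ffun 'I_K -> V}) (w : 'rV[R]_L) : R :=
  match n with
  | 0 => gfun w
  | n'.+1 => Num.min (gfun w) (Aop k h w (Jaux n' k.+1))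
  end.

(* Jbar_k ; Jbar_K = g and Jbar_k = min(g, A_k) for k < K *)
Definition Jbar (k : nat) : {ffun 'I_K -> V} -> 'rV[R]_L -> R := Jaux (K - k) k.

Definition Afun (k : nat) (h : {ffun 'I_K -> V}) (w : 'rV[R]_L) : R :=
  Aop k h w (Jbar k.+1).

End CostToGo.

Section Shape.
Variables (R : realType) (L : nat).

Definition concave_on (S : set 'rV[R]_L) (f : 'rV[R]_L -> R) : Prop :=
  forall x y t, S x -> S y -> 0 <= t <= 1 ->
    t * f x + (1 - t) * f y <= f (t *: x + (1 - t) *: y).

Definition rdot (a w : 'rV[R]_L) : R := \sum_i a 0 i * w 0 i.

Definition polyhedron (P : set 'rV[R]_L) : Prop :=
  exists m (a : 'I_m -> 'rV[R]_L) (b : 'I_m -> R),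
    P = [set x | forall j, rdot (a j) x <= b j].

Definition piecewise_linear (S : set 'rV[R]_L) (f : 'rV[R]_L -> R) : Prop :=
  exists n (P : 'I_n -> set 'rV[R]_L) (c : 'I_n -> 'rV[R]_L) (d : 'I_n -> R),
    (forall i, polyhedron (P i)) /\
    (forall x, S x -> exists i, P i x) /\
    (forall i x, S x -> P i x -> f x = rdot (c i) x + d i).

End Shape.

From HB Require Import structures.
From mathcomp Require Import all_boot all_order all_algebra.
From mathcomp Require Import all_classical all_reals all_analysis.
Import Order.TTheory GRing.Theory Num.Theory.
Import numFieldNormedType.Exports.
Local Open Scope classical_set_scope.
Local Open Scope ring_scope.
Set Implicit Arguments. Unset Strict Implicit. Unset Printing Implicit Defensive.

(* Call f min-linear on S if on S it is the pointwise minimum of finitely many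
   linear forms w |-> c . w.  On the simplex, g is min-linear and so is every
   constant (r = r (sum_i w_i)); min-linearity is stable under sums, binary
   minima and the perspective map J |-> (w |-> s(w) J(diag(D) w / s(w))),
   s(w) = D . w, D >= 0, because s(w) (c . diag(D) w / s(w)) = (diag(D) c) . w.
   By backward induction every Jbar_k, hence every A_k, is min-linear.  A
   minimum of finitely many linear forms c_i . w is concave and continuous, and
   it equals c_i . w on the polyhedron {w | c_i . w <= c_j . w for all j};
   these polyhedra cover the space. *)

Section MinLinear.
Variables (R : realType) (L : nat).
Implicit Types (S : set 'rV[R]_L) (f g : 'rV[R]_L -> R) (a c w x y : 'rV[R]_L).

Lemma rdotDl a c w : rdot (a + c) w = rdot a w + rdot c w.
Proof. by rewrite /rdot -big_split; apply: eq_bigr => i _; rewrite mxE mulrDl. Qed.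

Lemma rdotBl a c w : rdot (a - c) w = rdot a w - rdot c w.
Proof. by rewrite /rdot -sumrB; apply: eq_bigr => i _; rewrite !mxE mulrBl. Qed.

Lemma rdot0l w : rdot 0 w = 0.
Proof. by rewrite /rdot big1 // => i _; rewrite mxE mul0r. Qed.

Lemma rdotDr c x y : rdot c (x + y) = rdot c x + rdot c y.
Proof. by rewrite /rdot -big_split; apply: eq_bigr => i _; rewrite mxE mulrDr. Qed.

Lemma rdotZr c (t : R) x : rdot c (t *: x) = t * rdot c x.
Proof. by rewrite /rdot mulr_sumr; apply: eq_bigr => i _; rewrite mxE mulrCA. Qed.

Lemma continuous_rdot c : continuous (rdot c).
Proof.
rewrite /rdot; elim: (index_enum _) => [|i r IH].
  by under eq_fun do rewrite big_nil; exact: cst_continuous.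
have -> : (fun w : 'rV[R]_L => \sum_(j <- i :: r) c 0 j * w 0 j) =
    (fun _ => c 0 i) \* (fun w : 'rV[R]_L => w 0 i) + (fun w => \sum_(j <- r) c 0 j * w 0 j).
  by apply/funext => w; rewrite big_cons.
move=> w; apply: continuousD; last exact: IH.
by apply: continuousM; [exact: cst_continuous | exact: coord_continuous].
Qed.

Lemma continuous_bigmin_rdot c0 s :
  continuous (fun w => \big[Num.min/rdot c0 w]_(c <- s) rdot c w).
Proof.
elim: s => [|c s IH]; first by under eq_fun do rewrite big_nil; exact: continuous_rdot.
under eq_fun do rewrite big_cons.
by move=> w; apply: continuous_min; [exact: continuous_rdot | exact: IH].
Qed.

Definition min_linear S f : Prop :=
  exists s : seq 'rV[R]_L, forall w, S w ->
    (forall c, c \in s -> f w <= rdot c w) /\ exists2 c, c \in s & f w = rdot c w.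

Lemma min_linear0 S : min_linear S (fun => 0).
Proof.
by exists [:: 0] => w _; split; [move=> c /[!inE] /eqP -> | exists 0]; rewrite ?inE ?rdot0l.
Qed.

Lemma min_linearD S f g :
  min_linear S f -> min_linear S g -> min_linear S (fun w => f w + g w).
Proof.
move=> [s1 H1] [s2 H2]; exists [seq a + c | a <- s1, c <- s2] => w Sw.
have [f_le [c1 c1s f_eq]] := H1 w Sw; have [g_le [c2 c2s g_eq]] := H2 w Sw.
split; last by exists (c1 + c2); [exact: allpairs_f | rewrite rdotDl f_eq g_eq].
by move=> _ /allpairsP [[a c] /= [as_ cs ->]]; rewrite rdotDl lerD ?f_le ?g_le.
Qed.

Lemma min_linear_sum S (I : Type) (r : seq I) (F : I -> 'rV[R]_L -> R) :
  (forall v, min_linear S (F v)) -> min_linear S (fun w => \sum_(v <- r) F v w).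
Proof.
move=> HF; elim: r => [|v r IH].
  by under eq_fun do rewrite big_nil; exact: min_linear0.
by under eq_fun do rewrite big_cons; exact: min_linearD.
Qed.

Lemma min_linear_min S f g :
  min_linear S f -> min_linear S g -> min_linear S (fun w => Num.min (f w) (g w)).
Proof.
move=> [s1 H1] [s2 H2]; exists (s1 ++ s2) => w Sw.
have [f_le [c1 c1s f_eq]] := H1 w Sw; have [g_le [c2 c2s g_eq]] := H2 w Sw.
split=> [c|]; first by rewrite mem_cat ge_min => /orP [/f_le|/g_le] ->; rewrite ?orbT.
by case: leP => _; [exists c1 | exists c2]; rewrite // mem_cat ?c1s ?c2s ?orbT.
Qed.

Lemma min_linear_concave S f :
  (forall x y (t : R), S x -> S y -> 0 <= t <= 1 -> S (t *: x + (1 - t) *: y)) ->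
  min_linear S f -> concave_on S f.
Proof.
move=> S_convex [s H] x y t Sx Sy t01; have /andP [t_ge0 t_le1] := t01.
have [_ [c cs ->]] := H _ (S_convex x y t Sx Sy t01).
have [fx_le _] := H x Sx; have [fy_le _] := H y Sy.
by rewrite rdotDr !rdotZr lerD // ler_wpM2l ?subr_ge0 ?fx_le ?fy_le.
Qed.

Lemma min_linear_continuous S f : min_linear S f -> {within S, continuous f}.
Proof.
move=> [s H].
pose g w := \big[Num.min/rdot (head 0 s) w]_(c <- s) rdot c w.
apply: (@subspace_eq_continuous _ _ _ g); last first.
  exact/continuous_subspaceT/continuous_bigmin_rdot.
move=> w /[!inE] Sw; have [f_le [c cs f_eq]] := H w Sw.
have s_head : head 0 s \in s by case: s {H g f_le f_eq} cs => //= *; exact: mem_head.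
change (g w = f w); apply/le_anti/andP; split.
  by rewrite f_eq (ge_bigmin_seq _ _ xpredT).
by rewrite /g big_seq; apply: le_bigmin => [|c']; exact: f_le.
Qed.

Lemma min_linear_piecewise_linear S f :
  min_linear S f -> piecewise_linear S f.
Proof.
move=> [s H]; pose c (i : 'I_(size s)) := nth 0 s i.
have minimizer_index w : S w -> exists i, f w = rdot (c i) w /\
    forall j, rdot (c i - c j) w <= 0.
  move=> Sw; have [f_le [c1 c1s f_eq]] := H w Sw.
  have c1_idx : (index c1 s < size s)%N by rewrite index_mem.
  exists (Ordinal c1_idx); rewrite /c /= nth_index //.
  by split=> // j; rewrite rdotBl subr_le0 -f_eq f_le ?mem_nth.
exists (size s), (fun i => [set w | forall j, rdot (c i - c j) w <= 0]), c, (fun => 0).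
split; [|split].
- by move=> i; exists (size s), (fun j => c i - c j), (fun => 0); reflexivity.
- by move=> w /minimizer_index [i [_ ?]]; exists i.
- move=> i w Sw /= ci_min; have [j [f_eq cj_min]] := minimizer_index w Sw.
  rewrite addr0 f_eq; apply/le_anti/andP.
  by split; rewrite -subr_le0 -rdotBl; [exact: cj_min | exact: ci_min].
Qed.

End MinLinear.

Section Simplex.
Variables (R : realType) (L : nat).
Implicit Types (J : 'rV[R]_L -> R) (c w x y : 'rV[R]_L).

Lemma simplex_convex x y (t : R) : simplex x -> simplex y -> 0 <= t <= 1 ->
  simplex (t *: x + (1 - t) *: y).
Proof.
move=> [x_ge0 x_sum] [y_ge0 y_sum] /andP [t_ge0 t_le1].
split=> [i|]; first by rewrite !mxE addr_ge0 ?mulr_ge0 ?subr_ge0.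
under eq_bigr do rewrite !mxE.
by rewrite big_split /= -!mulr_sumr x_sum y_sum !mulr1 subrKC.
Qed.

Lemma simplex_normalize (a : 'I_L -> R) : (forall i, 0 <= a i) ->
  \sum_i a i != 0 -> simplex (\row_i (a i / \sum_j a j)).
Proof.
move=> a_ge0 a_sum; split=> [i|]; first by rewrite mxE divr_ge0 ?sumr_ge0.
by under eq_bigr do rewrite mxE; rewrite -mulr_suml divff.
Qed.

Lemma min_linear_cst (r : R) : min_linear (@simplex R L) (fun => r).
Proof.
have rdot_cst w : simplex w -> rdot (const_mx r) w = r.
  by case=> _ w_sum; rewrite /rdot -[RHS]mulr1 -w_sum mulr_sumr; under eq_bigr do rewrite mxE.
exists [:: const_mx r] => w Sw.
by split; [move=> c /[!inE] /eqP -> | exists (const_mx r)]; rewrite ?inE ?rdot_cst.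
Qed.

Definition perspective (D : 'I_L -> R) J w : R :=
  let s := \sum_i D i * w 0 i in
  if s == 0 then 0 else s * J (\row_i (D i * w 0 i / s)).

Lemma min_linear_perspective (D : 'I_L -> R) J : (forall i, 0 <= D i) ->
  min_linear (@simplex R L) J -> min_linear (@simplex R L) (perspective D J).
Proof.
move=> D_ge0 [s HJ]; pose Dc c := \row_i (D i * c 0 i) : 'rV[R]_L.
exists [seq Dc c | c <- s] => w Sw; have [w_ge0 _] := Sw.
have Dw_ge0 i : 0 <= D i * w 0 i by rewrite mulr_ge0.
have rdot_Dc c : rdot (Dc c) w = \sum_i c 0 i * (D i * w 0 i).
  by apply: eq_bigr => i _; rewrite mxE mulrCA mulrA.
rewrite /perspective; set sw := \sum_i _; case: eqP => [sw0|/eqP sw_neq0].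
  have rdot_Dc0 c : rdot (Dc c) w = 0.
    by rewrite rdot_Dc big1 // => i _; rewrite (psumr_eq0P (fun i _ => Dw_ge0 i) sw0) ?mulr0.
  split=> [_ /mapP [c _ ->]|]; first by rewrite rdot_Dc0.
  by have [_ [c cs _]] := HJ w Sw; exists (Dc c); rewrite ?map_f ?rdot_Dc0.
have sw_gt0 : 0 < sw by rewrite lt0r sw_neq0 sumr_ge0.
have [J_le [c cs J_eq]] := HJ _ (simplex_normalize Dw_ge0 sw_neq0).
have rdot_persp c' : sw * rdot c' (\row_i (D i * w 0 i / sw)) = rdot (Dc c') w.
  rewrite rdot_Dc /rdot mulr_sumr; apply: eq_bigr => i _; rewrite mxE.
  by rewrite mulrCA [sw * _]mulrC mulfVK.
split=> [_ /mapP [c' c's ->]|].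
  by rewrite -rdot_persp; apply: ler_wpM2l; [exact: ltW | exact: J_le].
by exists (Dc c); rewrite ?map_f // J_eq rdot_persp.
Qed.

Lemma minL_attained (F : 'I_L -> R) (j0 : 'I_L) : exists j, minL F = F j.
Proof.
have [j _ minE] := @eq_bigmin _ _ _ (\big[Num.max/0]_(j < L) F j) j0 xpredT F isT
  (fun i _ => le_bigmax _ _ i).
by exists j.
Qed.

Lemma simplex_dim_gt0 w : simplex w -> (0 < L)%N.
Proof. by case: L w => [w [_]|//]; rewrite big_ord0 => /eqP; rewrite eq_sym oner_eq0. Qed.

Lemma min_linear_gfun (Q : 'I_L -> 'I_L -> R) : min_linear (@simplex R L) (gfun Q).
Proof.
pose col j := \row_i Q i j : 'rV[R]_L.
have rdot_col j w : rdot (col j) w = \sum_i Q i j * w 0 i.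
  by apply: eq_bigr => i _; rewrite mxE.
exists [seq col j | j <- enum 'I_L] => w Sw; split.
  by move=> _ /mapP [j _ ->]; rewrite rdot_col; exact: bigmin_le.
have [j gE] := minL_attained (fun j => \sum_i Q i j * w 0 i) (Ordinal (simplex_dim_gt0 Sw)).
by exists (col j); rewrite ?map_f ?mem_enum // rdot_col.
Qed.

End Simplex.

Section CostToGo.
Variables (R : realType) (L K : nat) (V : finType).
Variables (p : 'I_L -> {ffun 'I_K -> V} -> R) (e : nat -> R) (Q : 'I_L -> 'I_L -> R).
Hypothesis p_ge0 : forall i x, 0 <= p i x.

Lemma Delta_ge0 k h v i : 0 <= Delta p k h v i.
Proof. by rewrite divr_ge0 ?sumr_ge0. Qed.

Lemma min_linear_Aop k h (J : {ffun 'I_K -> V} -> 'rV[R]_L -> R) :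
  (forall h', min_linear (@simplex R L) (J h')) ->
  min_linear (@simplex R L) (fun w => Aop p e k h w J).
Proof.
move=> J_min; apply: min_linearD; first exact: min_linear_cst.
apply: min_linear_sum => v.
exact: (min_linear_perspective (Delta_ge0 k h v) (J_min (upd k h v))).
Qed.

Lemma min_linear_Jaux n k h : min_linear (@simplex R L) (Jaux p e Q n k h).
Proof.
elim: n k h => [|n IH] k h; first exact: min_linear_gfun.
by apply: min_linear_min; [exact: min_linear_gfun | exact: min_linear_Aop].
Qed.

Lemma min_linear_Afun k h : min_linear (@simplex R L) (Afun p e Q k h).
Proof. exact: min_linear_Aop (min_linear_Jaux _ _). Qed.

End CostToGo.

Theorem lemma2 (R : realType) (L K : nat) (V : finType)
  (p : 'I_L -> {ffun 'I_K -> V} -> R) (e : nat -> R) (Q : 'I_L -> 'I_L -> R)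
  (p_ge0 : forall i x, 0 <= p i x)
  (p_sum1 : \sum_(i < L) \sum_(x : {ffun 'I_K -> V}) p i x = 1)
  (e_gt0 : forall k, (k < K)%N -> 0 < e k)
  (Q_ge0 : forall i j, 0 <= Q i j)
  (k : nat) (hk : (k < K)%N) (h : {ffun 'I_K -> V}) :
  concave_on (@simplex R L) (Afun p e Q k h) /\
  {within @simplex R L, continuous (Afun p e Q k h)} /\
  piecewise_linear (@simplex R L) (Afun p e Q k h).
Proof.
have A_min := min_linear_Afun e Q p_ge0 k h.
split; first exact: min_linear_concave (@simplex_convex R L) A_min.
by split; [exact: min_linear_continuous | exact: min_linear_piecewise_linear].
Qed.
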